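(* Let $(\mathcal{X},d)$ be a finite metric space, $P$ a probability distribution on $\mathcal{X}$, $A\subseteq\mathcal{X}$ a nonempty set of allowable points, and $k\ge1$ an integer. Let $O$ be an optimal $k$-RRP solution, i.e., a $k$-multiset of points of $A$ minimizing $\mathbb{E}_{X\sim P_k}[d_k(O,X)]$ among all $k$-multisets of points of $A$. Let $S\sim P_k$ be a random $k$-multiset and, for each $S$, let $T(S)$ be a $k$-multiset of points of $A$ minimizing $d_k(S,T(S))$ (algorithm RRP returns $T(S)$). Then $$\mathbb{E}_{S\sim P_k}\mathbb{E}_{X\sim P_k}[d_k(T(S),X)]\le 3\cdot \mathbb{E}_{X\sim P_k}[d_k(O,X)].$$
   Context: For multisets $U,V$ of exactly $k$ points of $\mathcal{X}$, $d_k(U,V)$ is the minimum, over perfect matchings between the $k$ elements of $U$ and the $k$ elements of $V$ (with multiplicity), of the sum of the distances of matched pairs. $P_k$ is the distribution of the multiset of $k$ points of $\mathcal{X}$ drawn i.i.d. from $P$. *)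

From mathcomp Require Import all_boot all_order all_algebra all_fingroup.
Set Implicit Arguments. Unset Strict Implicit. Unset Printing Implicit Defensive.
Import Order.TTheory GRing.Theory Num.Theory.
Local Open Scope ring_scope.

Definition is_metric (R : realFieldType) (X : finType) (d : X -> X -> R) : Prop :=
  [/\ forall x y, 0 <= d x y,
      forall x y, d x y = 0 <-> x = y,
      forall x y, d x y = d y x &
      forall x y z, d x z <= d x y + d y z].

Definition is_prob (R : realFieldType) (X : finType) (P : X -> R) : Prop :=
  (forall x, 0 <= P x) /\ \sum_(x : X) P x = 1.

(* A k-multiset is represented by a k-tuple (an ordered list of its elements
   with multiplicity); d_k is invariant under reordering, so this is harmless. *)
Definition match_cost (R : realFieldType) (X : finType) (d : X -> X -> R) (k : nat)
  (U V : k.-tuple X) (s : 'S_k) : R :=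
  \sum_(i < k) d (tnth U i) (tnth V (s i)).

Definition dk (R : realFieldType) (X : finType) (d : X -> X -> R) (k : nat)
  (U V : k.-tuple X) : R :=
  \big[Num.min/match_cost d U V 1%g]_(s : 'S_k) match_cost d U V s.

(* Probability that k i.i.d. draws from P give the tuple S. The law P_k of the
   multiset is the pushforward of this law under forgetting the order. *)
Definition Pk (R : realFieldType) (X : finType) (P : X -> R) (k : nat)
  (S : k.-tuple X) : R :=
  \prod_(i < k) P (tnth S i).

Definition EPk (R : realFieldType) (X : finType) (P : X -> R) (k : nat)
  (f : k.-tuple X -> R) : R :=
  \sum_(S : k.-tuple X) Pk P S * f S.

Definition in_A (X : finType) (A : {set X}) (k : nat) (U : k.-tuple X) : bool :=
  all (fun x => x \in A) U.

Definition rrp_cost (R : realFieldType) (X : finType) (d : X -> X -> R)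
  (P : X -> R) (k : nat) (O : k.-tuple X) : R :=
  EPk P (fun Y => dk d O Y).

From mathcomp Require Import all_boot all_order all_algebra all_fingroup.
From mathcomp Require Import lra.
Set Implicit Arguments. Unset Strict Implicit. Unset Printing Implicit Defensive.
Import Order.TTheory GRing.Theory Num.Theory.
Local Open Scope ring_scope.

(* Composing matchings shows that d_k is a pseudometric on k-tuples. If T(S)
   is a nearest allowable tuple to S and O is any allowable tuple, then
   d_k(T(S), Y) <= d_k(T(S), S) + d_k(S, Y) <= d_k(O, S) + (d_k(S, O) + d_k(O, Y)).
   Taking expectations over the i.i.d. samples S and Y gives the factor 3. *)

Section MatchingDistance.

Variables (R : realFieldType) (X : finType) (d : X -> X -> R) (k : nat).

Lemma dk_le_match_cost (U V : k.-tuple X) (s : 'S_k) :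
  dk d U V <= match_cost d U V s.
Proof. by rewrite /dk (bigD1 s) //= ge_min lexx. Qed.

Lemma dk_attained (U V : k.-tuple X) : exists s, dk d U V = match_cost d U V s.
Proof.
rewrite /dk; apply: (big_ind (fun x => exists s, x = match_cost d U V s)).
- by exists 1%g.
- by move=> _ _ [s ->] [t ->]; rewrite /Num.min; case: ifP; [exists s | exists t].
- by move=> s _; exists s.
Qed.

Hypothesis dC : forall x y, d x y = d y x.
Hypothesis d_triangle : forall x y z, d x z <= d x y + d y z.

Lemma match_cost_invg (U V : k.-tuple X) (s : 'S_k) :
  match_cost d U V s^-1 = match_cost d V U s.
Proof.
rewrite /match_cost (reindex_inj (@perm_inj _ s)) /=.
by apply: eq_bigr => i _; rewrite permK dC.
Qed.

Lemma dk_leC (U V : k.-tuple X) : dk d U V <= dk d V U.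
Proof.
have [s ->] := dk_attained V U.
by rewrite -match_cost_invg dk_le_match_cost.
Qed.

Lemma dkC (U V : k.-tuple X) : dk d U V = dk d V U.
Proof. by apply/eqP; rewrite eq_le !dk_leC. Qed.

Lemma dk_triangle (U V W : k.-tuple X) : dk d U W <= dk d U V + dk d V W.
Proof.
have [s ->] := dk_attained U V; have [t ->] := dk_attained V W.
apply: le_trans (dk_le_match_cost _ _ (s * t)%g) _.
rewrite /match_cost [X in _ <= _ + X](reindex_inj (@perm_inj _ s)) /= -big_split /=.
by apply: ler_sum => i _; rewrite permM.
Qed.

Lemma dk_nearest_le (S O N Y : k.-tuple X) :
  dk d S N <= dk d S O -> dk d N Y <= 2 * dk d O S + dk d O Y.
Proof.
move=> N_nearest; apply: le_trans (dk_triangle N S Y) _.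
rewrite mulr2n mulrDl mul1r -addrA (dkC N) (dkC O S) lerD //.
exact: dk_triangle.
Qed.

End MatchingDistance.

Section Expectation.

Variables (R : realFieldType) (X : finType) (P : X -> R) (k : nat).
Hypothesis P_prob : is_prob P.

Lemma Pk_ge0 (S : k.-tuple X) : 0 <= Pk P S.
Proof. by apply: prodr_ge0 => i _; case: P_prob. Qed.

Lemma sum_Pk : \sum_(S : k.-tuple X) Pk P S = 1.
Proof.
have -> : \sum_(S : k.-tuple X) Pk P S = \sum_(f : {ffun 'I_k -> X}) \prod_i P (f i).
  rewrite (reindex (fun f : {ffun 'I_k -> X} => [tuple f i | i < k])) /=.
    by apply: eq_bigr => f _; apply: eq_bigr => i _; rewrite tnth_mktuple.
  exists (fun S : k.-tuple X => [ffun i => tnth S i]) => f _.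
    by apply/ffunP => i; rewrite ffunE tnth_mktuple.
  by apply: eq_from_tnth => i; rewrite tnth_mktuple ffunE.
rewrite -(bigA_distr_bigA (fun _ x => P x)) /=.
by case: P_prob => _ ->; rewrite big1.
Qed.

Lemma eq_EPk (f g : k.-tuple X -> R) : (forall S, f S = g S) -> EPk P f = EPk P g.
Proof. by move=> fg; apply: eq_bigr => S _; rewrite fg. Qed.

Lemma ler_EPk (f g : k.-tuple X -> R) :
  (forall S, f S <= g S) -> EPk P f <= EPk P g.
Proof. by move=> fg; apply: ler_sum => S _; rewrite ler_wpM2l ?Pk_ge0. Qed.

Lemma EPkD (f g : k.-tuple X -> R) :
  EPk P (fun S => f S + g S) = EPk P f + EPk P g.
Proof. by rewrite -big_split; apply: eq_bigr => S _; rewrite mulrDr. Qed.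

Lemma EPkZ (c : R) (f : k.-tuple X -> R) :
  EPk P (fun S => c * f S) = c * EPk P f.
Proof. by rewrite mulr_sumr; apply: eq_bigr => S _; rewrite mulrCA. Qed.

Lemma EPk_cst (c : R) : EPk P (fun _ : k.-tuple X => c) = c.
Proof. by rewrite /EPk -mulr_suml sum_Pk mul1r. Qed.

End Expectation.

Theorem theorem6 (R : realFieldType) (X : finType) (d : X -> X -> R)
  (P : X -> R) (A : {set X}) (k : nat)
  (O : k.-tuple X) (T : k.-tuple X -> k.-tuple X) :
  is_metric d ->
  is_prob P ->
  A != set0 ->
  (0 < k)%N ->
  in_A A O ->
  (forall U : k.-tuple X, in_A A U -> rrp_cost d P O <= rrp_cost d P U) ->
  (forall S : k.-tuple X, in_A A (T S)) ->
  (forall (S U : k.-tuple X), in_A A U -> dk d S (T S) <= dk d S U) ->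
  EPk P (fun S => EPk P (fun Y => dk d (T S) Y)) <= 3 * rrp_cost d P O.
Proof.
move=> [_ _ dC d_triangle] P_prob _ _ O_A _ _ T_nearest.
have T_bound S Y : dk d (T S) Y <= 2 * dk d O S + dk d O Y.
  exact: dk_nearest_le dC d_triangle _ _ _ _ (T_nearest S O O_A).
apply: le_trans (ler_EPk P_prob (fun S => ler_EPk P_prob (T_bound S))) _.
have inner S : EPk P (fun Y => 2 * dk d O S + dk d O Y)
             = 2 * dk d O S + rrp_cost d P O.
  by rewrite (EPkD P (fun _ => 2 * dk d O S)) EPk_cst.
rewrite (eq_EPk P inner) EPkD EPkZ EPk_cst // -/(rrp_cost d P O).
lra.
Qed.
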